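(* Let $q>1$ and let $\rho$ be a positive $2\pi$-periodic $C^2$ function with $(\ln\rho)''(t)<\sqrt{q}/(1+\sqrt{q})$ for all $t$; let $y(\theta)=\rho(\theta)(\cos\theta,\sin\theta)^T$, and let $\phi$ be a continuous function on $\mathbb{S}^1$. With the notation in the context, suppose there is a sequence of positive numbers $k_n\to\infty$ such that for every $\eta\in\mathbb{S}^1$ and every integer $N\ge0$, $$\sum_{j,l=1}^2\big(f_\eta^{j,l}\big)^N\frac{\phi(\mathcal{T}_{j,l}\eta+\delta_{l,2}\pi)\,\Psi_\eta^{j,l}}{|\det D^2\psi_\eta^{j,l}|^{1/2}}\,e^{\mathrm{i}\pi\frac{(-1)^l(1-(-1)^j)}{4}+\mathrm{i}k_n\psi_\eta^{j,l}}\longrightarrow0\quad(n\to\infty).$$ Then for every $\eta\in\mathbb{S}^1$, the set $\Lambda=\Lambda_\eta=\{(j,l)\in\{1,2\}^2:\phi(\mathcal{T}_{j,l}\eta+\delta_{l,2}\pi)\neq0\}$ satisfies $\#\Lambda\in\{0,2,3,4\}$, and moreover: if $\#\Lambda\in\{2,3\}$, then $f_\eta^{j,l}$ takes the same value for all $(j,l)\in\Lambda$; if $\#\Lambda=4$, then either $f_\eta^{j,l}$ takes the same value for all $(j,l)\in\Lambda$, or $\Lambda=\Lambda_1\cup\Lambda_2$ with $\#\Lambda_1=\#\Lambda_2=2$, $f_\eta^{j,l}$ constant on each $\Lambda_p$, and for each $p=1,2$ and every integer $N\ge0$ the sum above restricted to $(j,l)\in\Lambda_p$ tends to $0$ as 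$n\to\infty$.
   Context: Identify $\mathbb{S}^1$ with $\mathbb{R}/(2\pi\mathbb{Z})$ via $\theta\mapsto(\cos\theta,\sin\theta)^T$; $\theta_\eta$ is the angle of $\eta$, and $x^\perp=(-x_2,x_1)^T$. For $\eta\in\mathbb{S}^1$ and $\xi=(\cos\theta_\xi,\sin\theta_\xi)$: $\psi_\eta(\theta,\theta_\xi)=(\sqrt{q}\eta+\xi)\cdot y(\theta)$, $\Psi_\eta(\theta,\theta_\xi)=-(\sqrt{q}\eta-\xi)\cdot y'(\theta)^\perp$, and $D^2\psi_\eta(\theta,\theta_\xi)=\begin{bmatrix}(\sqrt{q}\eta+\xi)\cdot y''(\theta)&\xi^\perp\cdot y'(\theta)\\ \xi^\perp\cdot y'(\theta)&-\xi\cdot y(\theta)\end{bmatrix}$. For $l\in\{1,2\}$ let $\eta_l=(-1)^{l-1}\eta$, $\theta_q=\arccos(1/\sqrt q)$, $h(\theta)=\frac{\sqrt q\sin\theta}{\sqrt q\cos\theta+1}$; the equation $(\ln\rho)'(\theta)=h(\theta-\theta_{\eta_l})$ has exactly two solutions in $\mathbb{R}/(2\pi\mathbb{Z})$: $\mathcal{T}_{1,l}\eta$ with $\theta-\theta_{\eta_l}\in(\theta_q-\pi,\pi-\theta_q)$ and $\mathcal{T}_{2,l}\eta$ with $\theta-\theta_{\eta_l}\in(\pi-\theta_q,\pi+\theta_q)$ (mod $2\pi$). Set $\{\Psi_\eta^{j,l},\psi_\eta^{j,l},D^2\psi_\eta^{j,l}\}=\{\Psi_\eta,\psi_\eta,D^2\psi_\eta\}(\mathcal{T}_{j,l}\eta,\mathcal{T}_{j,l}\eta+\delta_{l,2}\pi)$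 (these determinants are nonzero) and $f_\eta^{j,l}=\rho(\mathcal{T}_{j,l}\eta)\sin(\mathcal{T}_{j,l}\eta-\theta_\eta)$; $\delta_{l,2}$ is the Kronecker delta and $\phi$ is viewed as a function of the angle. *)

From Stdlib Require Import Reals Lra List ClassicalEpsilon.
From Coquelicot Require Import Coquelicot.
Import ListNotations.
Open Scope R_scope.

Definition all_idx : list (nat * nat) := [(1,1); (1,2); (2,1); (2,2)]%nat.

Definition kdelta2 (l : nat) : R := if Nat.eqb l 2 then 1 else 0.

Definition theta_q (q : R) : R := acos (1 / sqrt q).

Definition hfun (q t : R) : R := sqrt q * sin t / (sqrt q * cos t + 1).

(* angle of eta_l = (-1)^(l-1) eta, where a is the angle of eta *)
Definition theta_eta_l (a : R) (l : nat) : R := a + (INR l - 1) * PI.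

Definition in_mod2pi (x lo hi : R) : Prop :=
  exists k : Z, lo < x + 2 * PI * IZR k < hi.

Definition Tspec (q : R) (rho : R -> R) (j l : nat) (a th : R) : Prop :=
  0 <= th < 2 * PI /\
  Derive (fun t => ln (rho t)) th = hfun q (th - theta_eta_l a l) /\
  (if Nat.eqb j 1
   then in_mod2pi (th - theta_eta_l a l) (theta_q q - PI) (PI - theta_q q)
   else in_mod2pi (th - theta_eta_l a l) (PI - theta_q q) (PI + theta_q q)).

Definition Tjl (q : R) (rho : R -> R) (j l : nat) (a : R) : R :=
  epsilon (inhabits 0) (Tspec q rho j l a).

Definition y1 (rho : R -> R) (t : R) : R := rho t * cos t.
Definition y2 (rho : R -> R) (t : R) : R := rho t * sin t.

Definition psi_eta (q : R) (rho : R -> R) (a th thx : R) : R :=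
  (sqrt q * cos a + cos thx) * y1 rho th + (sqrt q * sin a + sin thx) * y2 rho th.

(* Psi_eta(theta, theta_xi) = - (sqrt q eta - xi) . y'(theta)^perp,
   with x^perp = (-x2, x1) *)
Definition Psi_eta (q : R) (rho : R -> R) (a th thx : R) : R :=
  - ((sqrt q * cos a - cos thx) * (- Derive (y2 rho) th)
     + (sqrt q * sin a - sin thx) * Derive (y1 rho) th).

Definition detD2psi (q : R) (rho : R -> R) (a th thx : R) : R :=
  let A := (sqrt q * cos a + cos thx) * Derive (Derive (y1 rho)) th
         + (sqrt q * sin a + sin thx) * Derive (Derive (y2 rho)) th in
  let B := (- sin thx) * Derive (y1 rho) th + cos thx * Derive (y2 rho) th in
  let Cc := - (cos thx * y1 rho th + sin thx * y2 rho th) in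
  A * Cc - B * B.

Definition thT q rho j l a : R := Tjl q rho j l a.
Definition thX q rho j l a : R := Tjl q rho j l a + kdelta2 l * PI.

Definition f_eta (q : R) (rho : R -> R) (a : R) (p : nat * nat) : R :=
  let '(j, l) := p in rho (thT q rho j l a) * sin (thT q rho j l a - a).

Definition phi_at (q : R) (rho : R -> R) (phi : R -> C) (a : R) (p : nat * nat) : C :=
  let '(j, l) := p in phi (thX q rho j l a).

Definition cexpi (t : R) : C := (cos t, sin t).

Definition term (q : R) (rho : R -> R) (phi : R -> C) (k : R) (N : nat)
    (a : R) (p : nat * nat) : C :=
  let '(j, l) := p in
  let th := thT q rho j l a in
  let thx := thX q rho j l a in
  Cmult
    (Cmult (RtoC (f_eta q rho a p ^ N * Psi_eta q rho a th thx
                  / sqrt (Rabs (detD2psi q rho a th thx))))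
           (phi_at q rho phi a p))
    (cexpi (PI * (-1) ^ l * (1 - (-1) ^ j) / 4 + k * psi_eta q rho a th thx)).

Definition sumC (L : list (nat * nat)) (F : nat * nat -> C) : C :=
  fold_right Cplus (RtoC 0) (map F L).

Definition in_Lambda (q : R) (rho : R -> R) (phi : R -> C) (a : R) (p : nat * nat) : bool :=
  if excluded_middle_informative (phi_at q rho phi a p = RtoC 0) then false else true.

Definition Lambda (q : R) (rho : R -> R) (phi : R -> C) (a : R) : list (nat * nat) :=
  filter (in_Lambda q rho phi a) all_idx.

Definition f_const_on (q : R) (rho : R -> R) (a : R) (L : list (nat * nat)) : Prop :=
  exists c : R, forall p, In p L -> f_eta q rho a p = c.

(* At each of the four points (T_{j,l} eta, T_{j,l} eta + delta_{l,2} pi), which exist by the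
   intermediate value theorem, the equation (ln rho)' = h turns Psi_eta and det D^2 psi_eta
   into polar expressions: with D = sqrt q cos u + 1 and u = theta - theta_{eta_l},
   Psi D = +-rho (q - 1) and (det D^2 psi) D = rho^2 (sqrt q (sqrt q + cos u) - (ln rho)'' D^2),
   and the curvature bound makes the latter nonzero.  Hence each summand with
   phi(...) <> 0 has a modulus that is positive and independent of n.

   The hypothesis says that all moments sum_p (f_p)^N x_p(n) tend to 0.  Multiplying by a
   polynomial vanishing at every other value of f shows that the partial sum over each level
   set {f = v} tends to 0, so no value of f is taken exactly once on Lambda.  The possible
   cardinalities and the splitting into two level sets of size two follow by counting. *)

From Stdlib Require Import Reals ZArith List Permutation Lra Lia Classical ClassicalEpsilon.
From Coquelicot Require Import Coquelicot.
Import ListNotations.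
Open Scope R_scope.

Definition null_seq (z : nat -> C) : Prop := is_lim_seq (fun n => Cmod (z n)) 0.

Lemma null_seq_ext z w : (forall n, z n = w n) -> null_seq z -> null_seq w.
Proof.
  intros E Hz. unfold null_seq. eapply is_lim_seq_ext; [|exact Hz].
  intros n; simpl; now rewrite E.
Qed.

Lemma null_seq_plus z w : null_seq z -> null_seq w -> null_seq (fun n => z n + w n)%C.
Proof.
  intros Hz Hw. unfold null_seq.
  apply is_lim_seq_le_le with (u := fun _ => 0) (w := fun n => Cmod (z n) + Cmod (w n)).
  - intros n; split; [apply Cmod_ge_0 | apply Cmod_triangle].
  - apply is_lim_seq_const.
  - replace (Finite 0) with (Finite (0 + 0)) by (f_equal; ring).
    now apply is_lim_seq_plus'.
Qed.

Lemma null_seq_scal (c : C) z : null_seq z -> null_seq (fun n => c * z n)%C.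
Proof.
  intros Hz. unfold null_seq.
  eapply is_lim_seq_ext. { intros n. symmetry. apply Cmod_mult. }
  replace (Finite 0) with (Rbar_mult (Cmod c) 0) by (simpl; f_equal; ring).
  now apply is_lim_seq_scal_l.
Qed.

Lemma null_seq_minus z w : null_seq z -> null_seq w -> null_seq (fun n => z n - w n)%C.
Proof.
  intros Hz Hw.
  apply null_seq_ext with (fun n => z n + RtoC (-1) * w n)%C.
  { intros n. replace (RtoC (-1)) with (Copp 1) by (apply injective_projections; simpl; ring).
    ring. }
  apply null_seq_plus; [exact Hz | now apply null_seq_scal].
Qed.

Lemma null_seq_Cmod_const z c : null_seq z -> (forall n, Cmod (z n) = c) -> c = 0.
Proof.
  intros Hz Hc. unfold null_seq in Hz.
  apply (is_lim_seq_ext _ (fun _ => c)) in Hz; [|exact Hc].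
  apply is_lim_seq_unique in Hz. rewrite Lim_seq_const in Hz. now injection Hz.
Qed.

Lemma sumC_cons p L F : sumC (p :: L) F = (F p + sumC L F)%C.
Proof. reflexivity. Qed.

Lemma sumC_ext L F G : (forall p, In p L -> F p = G p) -> sumC L F = sumC L G.
Proof.
  induction L as [|p L IH]; intros E; [reflexivity|].
  rewrite !sumC_cons, E by now left. rewrite IH; [reflexivity|].
  intros q Hq. apply E. now right.
Qed.

Lemma sumC_scal L F (c : C) : sumC L (fun p => c * F p)%C = (c * sumC L F)%C.
Proof.
  induction L as [|p L IH]; [unfold sumC; simpl; ring|].
  rewrite !sumC_cons, IH. ring.
Qed.

Lemma sumC_minus L F G : sumC L (fun p => F p - G p)%C = (sumC L F - sumC L G)%C.
Proof.
  induction L as [|p L IH]; [unfold sumC; simpl; ring|].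
  rewrite !sumC_cons, IH. ring.
Qed.

Lemma sumC_filter g L F : sumC (filter g L) F = sumC L (fun p => if g p then F p else 0%C).
Proof.
  induction L as [|p L IH]; [reflexivity|].
  cbn [filter]. rewrite (sumC_cons p L).
  destruct (g p); [rewrite sumC_cons|]; rewrite IH; ring.
Qed.

Lemma sumC_filter_split g L F :
  (sumC (filter g L) F + sumC (filter (fun p => negb (g p)) L) F)%C = sumC L F.
Proof.
  induction L as [|p L IH]; [unfold sumC; simpl; ring|].
  cbn [filter]. rewrite (sumC_cons p L), <- IH.
  destruct (g p); cbn [negb]; rewrite sumC_cons; ring.
Qed.

Lemma Permutation_filter_split {A} (g : A -> bool) L :
  Permutation (filter g L ++ filter (fun p => negb (g p)) L) L.
Proof.
  induction L as [|p L IH]; [reflexivity|].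
  simpl. destruct (g p); simpl.
  - now apply perm_skip.
  - rewrite <- Permutation_middle. now apply perm_skip.
Qed.

Definition Reqb (x y : R) : bool := if Req_dec_T x y then true else false.

Lemma ReqbP x y : reflect (x = y) (Reqb x y).
Proof. unfold Reqb. destruct (Req_dec_T x y); now constructor. Qed.

Definition fiber {A} (f : A -> R) (v : R) (L : list A) : list A :=
  filter (fun p => Reqb (f p) v) L.

Definition fiber_compl {A} (f : A -> R) (v : R) (L : list A) : list A :=
  filter (fun p => negb (Reqb (f p) v)) L.

Lemma In_fiber {A} (f : A -> R) v L p : In p (fiber f v L) <-> In p L /\ f p = v.
Proof.
  unfold fiber. rewrite filter_In. now destruct (ReqbP (f p) v); intuition.
Qed.

Lemma In_fiber_compl {A} (f : A -> R) v L p :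
  In p (fiber_compl f v L) <-> In p L /\ f p <> v.
Proof.
  unfold fiber_compl. rewrite filter_In. now destruct (ReqbP (f p) v); intuition.
Qed.

Lemma NoDup_singleton {A} (l : list A) p :
  NoDup l -> In p l -> (forall y, In y l -> y = p) -> l = [p].
Proof.
  intros Hnd Hp Hall. destruct l as [|x [|y l]]; [destruct Hp | now rewrite (Hall x) by now left|].
  exfalso. inversion Hnd as [|? ? Hx _]. apply Hx. left.
  now rewrite (Hall x), (Hall y) by (simpl; auto).
Qed.

Section Pairing.

Context {A : Type} (f : A -> R).

Definition paired (L : list A) : Prop :=
  forall p, In p L -> exists p', In p' L /\ p' <> p /\ f p' = f p.

Definition const_on (L : list A) : Prop := exists c, forall p, In p L -> f p = c.

Lemma paired_filter (g : R -> bool) L : paired L -> paired (filter (fun p => g (f p)) L).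
Proof.
  intros HL p Hp. apply filter_In in Hp as [Hp Hg].
  destruct (HL p Hp) as (p' & Hp' & Hne & E).
  exists p'. rewrite filter_In, E. auto.
Qed.

Lemma paired_length L : paired L -> L <> [] -> (2 <= length L)%nat.
Proof.
  intros HL Hne. destruct L as [|p [|p1 L]]; [easy| |simpl; lia].
  destruct (HL p (or_introl eq_refl)) as (p' & [<- | []] & Hne' & _). easy.
Qed.

Lemma const_on_fiber v L : const_on (fiber f v L).
Proof. exists v. intros p Hp. now apply In_fiber in Hp. Qed.

Lemma not_const_on L : ~ const_on L -> exists p1 p2, In p1 L /\ In p2 L /\ f p2 <> f p1.
Proof.
  intros Hnc. destruct L as [|p1 L]; [now exfalso; apply Hnc; exists 0|].
  apply NNPP. intros Hno. apply Hnc. exists (f p1). intros p2 Hp2.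
  apply NNPP. intros Hne. apply Hno. exists p1, p2. simpl; auto.
Qed.

Lemma paired_split_lengths L p1 p2 :
  paired L -> In p1 L -> In p2 L -> f p2 <> f p1 ->
  (2 <= length (fiber f (f p1) L))%nat /\ (2 <= length (fiber_compl f (f p1) L))%nat /\
  (length (fiber f (f p1) L) + length (fiber_compl f (f p1) L) = length L)%nat.
Proof.
  intros HL Hp1 Hp2 Hne. split; [|split].
  - apply paired_length; [now apply (paired_filter (fun y => Reqb y (f p1)))|].
    intros E. assert (H : In p1 (fiber f (f p1) L)) by now apply In_fiber.
    now rewrite E in H.
  - apply paired_length; [now apply (paired_filter (fun y => negb (Reqb y (f p1))))|].
    intros E. assert (H : In p2 (fiber_compl f (f p1) L)) by now apply In_fiber_compl.
    now rewrite E in H.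
  - apply filter_length.
Qed.

Lemma paired_short_const L : paired L -> (length L <= 3)%nat -> const_on L.
Proof.
  intros HL Hlen. apply NNPP. intros Hnc.
  destruct (not_const_on L Hnc) as (p1 & p2 & Hp1 & Hp2 & Hne).
  pose proof (paired_split_lengths L p1 p2 HL Hp1 Hp2 Hne). lia.
Qed.

Lemma paired_classification L : paired L -> (length L <= 4)%nat ->
  (length L = 0 \/ length L = 2 \/ length L = 3 \/ length L = 4)%nat /\
  ((length L = 2 \/ length L = 3)%nat -> const_on L) /\
  (length L = 4%nat -> const_on L \/
     exists v, length (fiber f v L) = 2%nat /\ length (fiber_compl f v L) = 2%nat /\
               const_on (fiber_compl f v L)).
Proof.
  intros HL Hle. split; [|split].
  - destruct L as [|p L']; [now left|].
    pose proof (paired_length (p :: L') HL ltac:(easy)). lia.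
  - intros Hlen. apply paired_short_const; [exact HL | lia].
  - intros Hlen. destruct (classic (const_on L)) as [Hc | Hnc]; [now left | right].
    destruct (not_const_on L Hnc) as (p1 & p2 & Hp1 & Hp2 & Hne).
    destruct (paired_split_lengths L p1 p2 HL Hp1 Hp2 Hne) as (H1 & H2 & Hsum).
    exists (f p1). split; [lia|split; [lia|]].
    apply paired_short_const; [|lia].
    now apply (paired_filter (fun y => negb (Reqb y (f p1)))).
Qed.

End Pairing.

Fixpoint poly_of_roots (W : list R) (t : R) : R :=
  match W with
  | [] => 1
  | w :: W' => (t - w) * poly_of_roots W' t
  end.

Lemma poly_of_roots_root W t : In t W -> poly_of_roots W t = 0.
Proof.
  induction W as [|w W IH]; intros H; [destruct H|].
  simpl. destruct H as [<- | H]; [ring | rewrite IH by exact H; ring].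
Qed.

Lemma poly_of_roots_neq0 W t : ~ In t W -> poly_of_roots W t <> 0.
Proof.
  induction W as [|w W IH]; intros H; simpl; [lra|].
  apply Rmult_integral_contrapositive_currified.
  - intros E. apply H. left. lra.
  - apply IH. intros Hin. apply H. now right.
Qed.

Section Moments.

Variable L : list (nat * nat).
Variable f : nat * nat -> R.
Variable x : nat -> nat * nat -> C.
Hypothesis moments :
  forall N, null_seq (fun n => sumC L (fun p => RtoC (f p ^ N) * x n p)%C).

Lemma null_seq_poly_moments W N :
  null_seq (fun n => sumC L (fun p => RtoC (poly_of_roots W (f p) * f p ^ N) * x n p)%C).
Proof.
  revert N. induction W as [|w W IH]; intros N; simpl.
  - eapply null_seq_ext; [|apply (moments N)].
    intros n. apply sumC_ext. intros p _. now rewrite Rmult_1_l.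
  - eapply null_seq_ext; [|exact (null_seq_minus _ _ (IH (S N)) (null_seq_scal (RtoC w) _ (IH N)))].
    intros n. cbv beta. rewrite <- sumC_scal, <- sumC_minus. apply sumC_ext. intros p _.
    cbn [pow]. rewrite !RtoC_mult, RtoC_minus. ring.
Qed.

(* Multiplying by the polynomial vanishing at every other value of f isolates the fiber. *)
Lemma null_seq_fiber v : null_seq (fun n => sumC (fiber f v L) (x n)).
Proof.
  set (W := map f (fiber_compl f v L)).
  assert (HW : poly_of_roots W v <> 0).
  { apply poly_of_roots_neq0. unfold W. rewrite in_map_iff.
    intros (p & Hp & Hin). apply In_fiber_compl in Hin. tauto. }
  eapply null_seq_ext;
    [|exact (null_seq_scal (RtoC (/ poly_of_roots W v)) _ (null_seq_poly_moments W 0))].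
  intros n. cbv beta. rewrite <- sumC_scal. unfold fiber. rewrite sumC_filter.
  apply sumC_ext. intros p Hp. destruct (ReqbP (f p) v) as [E | E].
  - rewrite E, Rmult_1_r, Cmult_assoc, <- RtoC_mult, Rinv_l by exact HW. ring.
  - rewrite (poly_of_roots_root W (f p)), Rmult_0_l; [ring|].
    apply in_map. now apply In_fiber_compl.
Qed.

Lemma null_seq_fiber_compl v : null_seq (fun n => sumC (fiber_compl f v L) (x n)).
Proof.
  eapply null_seq_ext; [|exact (null_seq_minus _ _ (moments 0) (null_seq_fiber v))].
  intros n. cbv beta. rewrite (sumC_ext L _ (x n)) by (intros p _; simpl; ring).
  rewrite <- (sumC_filter_split (fun p => Reqb (f p) v) L (x n)).
  unfold fiber_compl, fiber. ring.
Qed.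

(* A value of f taken only once on L would leave a single summand of constant modulus. *)
Lemma paired_of_moments :
  NoDup L ->
  (forall p, In p L -> exists c, 0 < c /\ forall n, Cmod (x n p) = c) ->
  paired f L.
Proof.
  intros Hnd Hmod p Hp. apply NNPP. intros Hno.
  assert (Hfib : fiber f (f p) L = [p]).
  { apply NoDup_singleton; [now apply NoDup_filter | now apply In_fiber |].
    intros p' Hp'. apply In_fiber in Hp' as [Hp' E].
    apply NNPP. intros Hne. apply Hno. now exists p'. }
  destruct (Hmod p Hp) as (c & Hc & Hn).
  enough (c = 0) by lra.
  apply (null_seq_Cmod_const (fun n => x n p)); [|exact Hn].
  eapply null_seq_ext; [|exact (null_seq_fiber (f p))].
  intros n. rewrite Hfib. unfold sumC; simpl. ring.
Qed.

End Moments.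

Lemma null_seq_const_on (f : nat * nat -> R) (x : nat -> nat * nat -> C) B :
  const_on f B -> null_seq (fun n => sumC B (x n)) ->
  forall N, null_seq (fun n => sumC B (fun p => RtoC (f p ^ N) * x n p)%C).
Proof.
  intros [c Hc] Hz N.
  eapply null_seq_ext; [|exact (null_seq_scal (RtoC (c ^ N)) _ Hz)].
  intros n. cbv beta. rewrite <- sumC_scal. apply sumC_ext.
  intros p Hp. now rewrite Hc.
Qed.

Lemma cos2_add_sin2 t : cos t ^ 2 + sin t ^ 2 = 1.
Proof. rewrite <- (sin2_cos2 t). unfold Rsqr. ring. Qed.

Lemma cos_add_2PI t : cos (t + 2 * PI) = cos t.
Proof. rewrite cos_plus, cos_2PI, sin_2PI. ring. Qed.

Lemma sin_add_2PI t : sin (t + 2 * PI) = sin t.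
Proof. rewrite sin_plus, cos_2PI, sin_2PI. ring. Qed.

Lemma periodic_Z (g : R -> R) :
  (forall t, g (t + 2 * PI) = g t) -> forall (k : Z) t, g (t + 2 * PI * IZR k) = g t.
Proof.
  intros Hg k. induction k as [|k IH|k IH] using Z.peano_ind; intros t.
  - now rewrite Rmult_0_r, Rplus_0_r.
  - rewrite succ_IZR, <- (IH t), <- (Hg (t + 2 * PI * IZR k)). f_equal. ring.
  - rewrite <- Z.sub_1_r, minus_IZR, <- (IH t), <- (Hg (t + 2 * PI * (IZR k - 1))).
    f_equal. ring.
Qed.

Lemma exists_shift_2PI x : exists k : Z, 0 <= x + 2 * PI * IZR k < 2 * PI.
Proof.
  pose proof PI_RGT_0.
  exists (- Int_part (x / (2 * PI)))%Z. rewrite opp_IZR.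
  destruct (base_Int_part (x / (2 * PI))) as [B1 B2].
  set (m := IZR (Int_part (x / (2 * PI)))) in *.
  assert (E : x = 2 * PI * (x / (2 * PI))) by (field; lra).
  split; nra.
Qed.

Lemma IVT_open (G : R -> R) lo hi :
  continuity G -> lo < hi -> G lo * G hi < 0 -> exists z, lo < z < hi /\ G z = 0.
Proof.
  intros HG Hlt Hneg.
  destruct (IVT_cor G lo hi HG (Rlt_le _ _ Hlt) (Rlt_le _ _ Hneg)) as (z & Hz & HGz).
  exists z. split; [|exact HGz].
  split; apply Rnot_le_lt; intros Hle;
    [replace z with lo in HGz by lra | replace z with hi in HGz by lra];
    rewrite HGz in Hneg; lra.
Qed.

Lemma Derive_periodic (g : R -> R) c t :
  (forall s, g (s + c) = g s) -> (forall s, ex_derive g s) -> Derive g (t + c) = Derive g t.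
Proof.
  intros Hg Hd.
  rewrite <- (Derive_ext (fun s => g (s + c)) g t Hg), (Derive_comp g (fun s => s + c));
    [|apply Hd | auto_derive; auto].
  replace (Derive (fun s => s + c) t) with 1; [ring|].
  symmetry. apply is_derive_unique. auto_derive; auto; ring.
Qed.

(* Polar form of Psi_eta and det D^2 psi_eta at a stationary point: [r], [r1], [r2] stand for
   rho and its derivatives, [L2] for (ln rho)'', [cu], [su] for the cosine and sine of
   theta - theta_{eta_l}, and the second hypothesis is (ln rho)' = h. *)
Lemma Psi_critical sq r r1 cu su :
  cu ^ 2 + su ^ 2 = 1 -> r1 * (sq * cu + 1) = r * sq * su ->
  (sq * (r * cu + r1 * su) - r) * (sq * cu + 1) = r * (sq * sq - 1).
Proof.
  intros Hp Hc.
  transitivity (r * sq * sq * (cu ^ 2 + su ^ 2) - r + sq * su * (r1 * (sq * cu + 1) - r * sq * su));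
    [ring | rewrite Hp, Hc; ring].
Qed.

Lemma det_critical sq r r1 r2 L2 cu su :
  cu ^ 2 + su ^ 2 = 1 -> r1 * (sq * cu + 1) = r * sq * su -> r * r2 - r1 ^ 2 = L2 * r ^ 2 ->
  (- r * ((r2 - r) * (sq * cu + 1) - 2 * sq * r1 * su) - r ^ 2) * (sq * cu + 1)
  = r ^ 2 * (sq * (sq + cu) - L2 * (sq * cu + 1) ^ 2).
Proof.
  intros Hp Hc HL.
  transitivity (- (r * r2 - r1 ^ 2 - L2 * r ^ 2) * (sq * cu + 1) ^ 2
                - (r1 * (sq * cu + 1) - r * sq * su) ^ 2
                + r ^ 2 * sq ^ 2 * (cu ^ 2 + su ^ 2 - 1)
                + r ^ 2 * (sq * (sq + cu) - L2 * (sq * cu + 1) ^ 2));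
    [ring | rewrite Hp, Hc, HL; ring].
Qed.

Lemma curvature_margin sq cu L2 :
  1 < sq -> -1 <= cu <= 1 -> sq * cu + 1 <> 0 -> L2 < sq / (1 + sq) ->
  0 < sq * (sq + cu) - L2 * (sq * cu + 1) ^ 2.
Proof.
  intros Hsq Hcu HD HL2.
  assert (HD2 : 0 < (sq * cu + 1) ^ 2) by (apply pow2_gt_0; exact HD).
  assert (Hbound : (sq * cu + 1) ^ 2 <= (1 + sq) * (sq + cu)).
  { assert (E : (1 + sq) * (sq + cu) - (sq * cu + 1) ^ 2
                = sq * sq * (1 - cu * cu) + (sq - 1) * (1 - cu)) by ring.
    assert (0 <= sq * sq * (1 - cu * cu)) by (apply Rmult_le_pos; nra).
    assert (0 <= (sq - 1) * (1 - cu)) by (apply Rmult_le_pos; lra).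
    lra. }
  assert (L2 * (sq * cu + 1) ^ 2 < sq / (1 + sq) * (sq * cu + 1) ^ 2)
    by (apply Rmult_lt_compat_r; assumption).
  assert (sq / (1 + sq) * (sq * cu + 1) ^ 2 <= sq * (sq + cu)).
  { replace (sq * (sq + cu)) with (sq / (1 + sq) * ((1 + sq) * (sq + cu))) by (field; lra).
    apply Rmult_le_compat_l; [apply Rlt_le, Rdiv_lt_0_compat|]; lra. }
  lra.
Qed.

Section Theta_q.

Variable q : R.
Hypothesis Hq : 1 < q.

Lemma sqrt_q_gt1 : 1 < sqrt q.
Proof. rewrite <- sqrt_1. apply sqrt_lt_1; lra. Qed.

Lemma theta_q_spec : 0 < theta_q q < PI /\ cos (theta_q q) = 1 / sqrt q.
Proof.
  pose proof sqrt_q_gt1.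
  assert (H1 : 0 < 1 / sqrt q < 1).
  { split; [apply Rdiv_lt_0_compat; lra|].
    apply (Rmult_lt_reg_r (sqrt q)); [lra|]. field_simplify; lra. }
  unfold theta_q. split; [apply acos_bound_lt; lra | apply cos_acos; lra].
Qed.

Lemma hfun_den_pos z : theta_q q - PI < z < PI - theta_q q -> 0 < sqrt q * cos z + 1.
Proof.
  intros Hz. destruct theta_q_spec as [Hb Hc]. pose proof sqrt_q_gt1.
  assert (Hcz : cos (PI - theta_q q) < cos z).
  { destruct (Rle_dec 0 z).
    - apply cos_decreasing_1; lra.
    - rewrite <- (cos_neg z). apply cos_decreasing_1; lra. }
  rewrite Rtrigo_facts.cos_pi_minus, Hc in Hcz.
  apply (Rmult_lt_compat_l (sqrt q)) in Hcz; [|lra].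
  replace (sqrt q * - (1 / sqrt q)) with (-1) in Hcz by (field; lra). lra.
Qed.

Lemma hfun_den_neg z : PI - theta_q q < z < PI + theta_q q -> sqrt q * cos z + 1 < 0.
Proof.
  intros Hz. destruct theta_q_spec as [Hb Hc]. pose proof sqrt_q_gt1.
  assert (Hcz : cos (theta_q q) < cos (z - PI)).
  { destruct (Rle_dec 0 (z - PI)).
    - apply cos_decreasing_1; lra.
    - rewrite <- (cos_neg (z - PI)). apply cos_decreasing_1; lra. }
  replace z with (z - PI + PI) by ring. rewrite neg_cos.
  rewrite Hc in Hcz. apply (Rmult_lt_compat_l (sqrt q)) in Hcz; [|lra].
  replace (sqrt q * (1 / sqrt q)) with 1 in Hcz by (field; lra). lra.
Qed.

Lemma hfun_den_neq0_mod2pi j x :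
  (if Nat.eqb j 1
   then in_mod2pi x (theta_q q - PI) (PI - theta_q q)
   else in_mod2pi x (PI - theta_q q) (PI + theta_q q)) ->
  sqrt q * cos x + 1 <> 0.
Proof.
  destruct (Nat.eqb j 1); intros [k Hk]; rewrite <- (periodic_Z cos cos_add_2PI k x).
  - pose proof (hfun_den_pos _ Hk). lra.
  - pose proof (hfun_den_neg _ Hk). lra.
Qed.

End Theta_q.

Lemma eta_l_sign l a : (l = 1 \/ l = 2)%nat ->
  exists sg, sg * sg = 1 /\
    cos a = sg * cos (theta_eta_l a l) /\ sin a = sg * sin (theta_eta_l a l) /\
    forall T, cos (T + kdelta2 l * PI) = sg * cos T /\ sin (T + kdelta2 l * PI) = sg * sin T.
Proof.
  unfold theta_eta_l, kdelta2. intros [-> | ->]; simpl.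
  - exists 1. replace (a + (1 - 1) * PI) with a by ring.
    repeat split; intros; rewrite ?Rmult_0_l, ?Rplus_0_r; ring.
  - exists (-1). replace (a + (1 + 1 - 1) * PI) with (a + PI) by ring.
    rewrite neg_cos, neg_sin. repeat split; intros; rewrite ?Rmult_1_l, ?neg_cos, ?neg_sin; ring.
Qed.

Section Curve.

Variable q : R.
Variable rho : R -> R.
Hypothesis Hq : 1 < q.
Hypothesis Hpos : forall t, 0 < rho t.
Hypothesis Hper : forall t, rho (t + 2 * PI) = rho t.
Hypothesis Hd1 : forall t, ex_derive rho t.
Hypothesis Hd2 : forall t, ex_derive (Derive rho) t.

Ltac fold_eta :=
  repeat match goal with
  | |- context [Derive (fun x : R => ?f x)] => change (fun x : R => f x) with f
  end.

Lemma Derive_ln_rho t : Derive (fun s => ln (rho s)) t = Derive rho t / rho t.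
Proof.
  apply is_derive_unique. specialize (Hpos t). specialize (Hd1 t).
  auto_derive; [auto|]. fold_eta. field. lra.
Qed.

Lemma Derive2_ln_rho t :
  rho t * Derive (Derive rho) t - Derive rho t ^ 2
  = Derive (Derive (fun s => ln (rho s))) t * rho t ^ 2.
Proof.
  rewrite (Derive_ext _ (fun s => Derive rho s / rho s) t Derive_ln_rho).
  replace (Derive (fun s => Derive rho s / rho s) t)
    with ((Derive (Derive rho) t * rho t - Derive rho t ^ 2) / rho t ^ 2).
  - field. specialize (Hpos t). lra.
  - symmetry. apply is_derive_unique. specialize (Hpos t). specialize (Hd1 t). specialize (Hd2 t).
    auto_derive; [repeat split; auto; lra|]. fold_eta. field. lra.
Qed.

Lemma Derive_y1 t : Derive (y1 rho) t = Derive rho t * cos t - rho t * sin t.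
Proof. apply is_derive_unique. unfold y1. specialize (Hd1 t). auto_derive; auto. fold_eta. ring. Qed.

Lemma Derive_y2 t : Derive (y2 rho) t = Derive rho t * sin t + rho t * cos t.
Proof. apply is_derive_unique. unfold y2. specialize (Hd1 t). auto_derive; auto. fold_eta. ring. Qed.

Lemma Derive2_y1 t :
  Derive (Derive (y1 rho)) t = Derive (Derive rho) t * cos t - 2 * Derive rho t * sin t - rho t * cos t.
Proof.
  rewrite (Derive_ext _ _ t Derive_y1). apply is_derive_unique.
  specialize (Hd1 t). specialize (Hd2 t). auto_derive; auto. fold_eta. ring.
Qed.

Lemma Derive2_y2 t :
  Derive (Derive (y2 rho)) t = Derive (Derive rho) t * sin t + 2 * Derive rho t * cos t - rho t * sin t.
Proof.
  rewrite (Derive_ext _ _ t Derive_y2). apply is_derive_unique.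
  specialize (Hd1 t). specialize (Hd2 t). auto_derive; auto. fold_eta. ring.
Qed.

Lemma Psi_eta_polar a al T thx sg :
  cos a = sg * cos al -> sin a = sg * sin al -> cos thx = sg * cos T -> sin thx = sg * sin T ->
  Psi_eta q rho a T thx
  = sg * (sqrt q * (rho T * cos (T - al) + Derive rho T * sin (T - al)) - rho T).
Proof.
  intros Hca Hsa Hcx Hsx. unfold Psi_eta.
  rewrite Derive_y1, Derive_y2, Hca, Hsa, Hcx, Hsx, cos_minus, sin_minus.
  transitivity (sg * (sqrt q * (rho T * (cos T * cos al + sin T * sin al)
                                + Derive rho T * (sin T * cos al - cos T * sin al))
                      - rho T * (cos T ^ 2 + sin T ^ 2)));
    [ring | rewrite cos2_add_sin2; ring].
Qed.

Lemma detD2psi_polar a al T thx sg :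
  sg * sg = 1 ->
  cos a = sg * cos al -> sin a = sg * sin al -> cos thx = sg * cos T -> sin thx = sg * sin T ->
  detD2psi q rho a T thx
  = - rho T * ((Derive (Derive rho) T - rho T) * (sqrt q * cos (T - al) + 1)
               - 2 * sqrt q * Derive rho T * sin (T - al)) - rho T ^ 2.
Proof.
  intros Hsg Hca Hsa Hcx Hsx. unfold detD2psi.
  rewrite Derive_y1, Derive_y2, Derive2_y1, Derive2_y2, Hca, Hsa, Hcx, Hsx, cos_minus, sin_minus.
  unfold y1, y2.
  set (P := cos T ^ 2 + sin T ^ 2).
  set (cu := cos T * cos al + sin T * sin al).
  set (su := sin T * cos al - cos T * sin al).
  transitivity (sg * sg * (- rho T * P * (sqrt q * ((Derive (Derive rho) T - rho T) * cu
                                               - 2 * Derive rho T * su)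
                                     + (Derive (Derive rho) T - rho T) * P)
                           - rho T ^ 2 * P ^ 2));
    [unfold P, cu, su; ring | unfold P; rewrite cos2_add_sin2, Hsg; ring].
Qed.

Lemma Tspec_of_root al lo hi z :
  lo < z < hi -> sqrt q * cos z + 1 <> 0 ->
  (sqrt q * cos z + 1) * (Derive rho (al + z) / rho (al + z)) = sqrt q * sin z ->
  exists th, 0 <= th < 2 * PI /\
    Derive (fun s => ln (rho s)) th = hfun q (th - al) /\ in_mod2pi (th - al) lo hi.
Proof.
  intros Hz HD Hroot.
  assert (Hdper : forall t, Derive rho (t + 2 * PI) = Derive rho t)
    by (intros t; apply Derive_periodic; assumption).
  destruct (exists_shift_2PI (al + z)) as [k Hk].
  exists (al + z + 2 * PI * IZR k). split; [exact Hk|split].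
  - replace (al + z + 2 * PI * IZR k - al) with (z + 2 * PI * IZR k) by ring.
    rewrite Derive_ln_rho, (periodic_Z rho Hper), (periodic_Z _ Hdper).
    unfold hfun. rewrite (periodic_Z cos cos_add_2PI), (periodic_Z sin sin_add_2PI), <- Hroot.
    field. split; [specialize (Hpos (al + z)); lra | exact HD].
  - exists (- k)%Z. rewrite opp_IZR.
    replace (al + z + 2 * PI * IZR k - al + 2 * PI * - IZR k) with z by ring. exact Hz.
Qed.

Lemma critical_root al lo hi :
  lo < hi -> sqrt q * cos lo + 1 = 0 -> sqrt q * cos hi + 1 = 0 -> sin lo * sin hi < 0 ->
  exists z, lo < z < hi /\
    (sqrt q * cos z + 1) * (Derive rho (al + z) / rho (al + z)) = sqrt q * sin z.
Proof.
  intros Hlt Hlo Hhi Hsin.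
  set (G := fun u => (sqrt q * cos u + 1) * (Derive rho (al + u) / rho (al + u)) - sqrt q * sin u).
  assert (HG : continuity G).
  { intros u. apply continuity_pt_filterlim, (@ex_derive_continuous R_AbsRing R_NormedModule).
    unfold G. specialize (Hd1 (al + u)). specialize (Hd2 (al + u)). specialize (Hpos (al + u)).
    auto_derive. repeat split; auto; lra. }
  destruct (IVT_open G lo hi HG Hlt) as (z & Hz & HGz).
  - replace (G lo * G hi) with (sqrt q ^ 2 * (sin lo * sin hi)) by (unfold G; rewrite Hlo, Hhi; ring).
    assert (0 < sqrt q ^ 2) by (apply pow2_gt_0; pose proof (sqrt_q_gt1 q Hq); lra). nra.
  - exists z. split; [exact Hz|]. unfold G in HGz. lra.
Qed.

Lemma Tspec_exists j l a : exists th, Tspec q rho j l a th.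
Proof.
  destruct (theta_q_spec q Hq) as [Hb Hc]. pose proof (sqrt_q_gt1 q Hq).
  assert (Hs : 0 < sin (theta_q q)) by (apply sin_gt_0; lra).
  assert (Hzero : forall t, cos t = - cos (theta_q q) -> sqrt q * cos t + 1 = 0)
    by (intros t E; rewrite E, Hc; field; lra).
  unfold Tspec. destruct (Nat.eqb j 1).
  - destruct (critical_root (theta_eta_l a l) (theta_q q - PI) (PI - theta_q q)) as (z & Hz & Hcrit).
    + lra.
    + apply Hzero. rewrite cos_minus, cos_PI, sin_PI. ring.
    + apply Hzero, Rtrigo_facts.cos_pi_minus.
    + rewrite sin_minus, Rtrigo_facts.sin_pi_minus, sin_PI, cos_PI. nra.
    + pose proof (hfun_den_pos q Hq z Hz).
      destruct (Tspec_of_root _ _ _ z Hz ltac:(lra) Hcrit) as (th & ?). now exists th.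
  - destruct (critical_root (theta_eta_l a l) (PI - theta_q q) (PI + theta_q q)) as (z & Hz & Hcrit).
    + lra.
    + apply Hzero, Rtrigo_facts.cos_pi_minus.
    + apply Hzero. rewrite (Rplus_comm PI), neg_cos. reflexivity.
    + rewrite Rtrigo_facts.sin_pi_minus, (Rplus_comm PI), neg_sin. nra.
    + pose proof (hfun_den_neg q Hq z Hz).
      destruct (Tspec_of_root _ _ _ z Hz ltac:(lra) Hcrit) as (th & ?). now exists th.
Qed.

Lemma Psi_det_neq0 j l a :
  (l = 1 \/ l = 2)%nat ->
  (forall t, Derive (Derive (fun s => ln (rho s))) t < sqrt q / (1 + sqrt q)) ->
  Psi_eta q rho a (thT q rho j l a) (thX q rho j l a) <> 0 /\
  detD2psi q rho a (thT q rho j l a) (thX q rho j l a) <> 0.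
Proof.
  intros Hl Hcurv.
  destruct (epsilon_spec (inhabits 0) (Tspec q rho j l a) (Tspec_exists j l a))
    as (_ & Hcrit & Hint).
  unfold thT, thX, Tjl. set (T := epsilon (inhabits 0) (Tspec q rho j l a)) in *.
  destruct (eta_l_sign l a Hl) as (sg & Hsg & Hca & Hsa & Hx). destruct (Hx T) as [Hcx Hsx].
  set (al := theta_eta_l a l) in *.
  pose proof (hfun_den_neq0_mod2pi q Hq j (T - al) Hint) as HD.
  pose proof (Hpos T) as HrT. pose proof (sqrt_q_gt1 q Hq) as Hsq.
  assert (Hr1 : Derive rho T * (sqrt q * cos (T - al) + 1) = rho T * sqrt q * sin (T - al)).
  { rewrite Derive_ln_rho in Hcrit. unfold hfun in Hcrit.
    replace (Derive rho T) with (rho T * (Derive rho T / rho T)) by (field; lra).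
    rewrite Hcrit. field. exact HD. }
  rewrite (Psi_eta_polar _ _ _ _ _ Hca Hsa Hcx Hsx), (detD2psi_polar _ _ _ _ _ Hsg Hca Hsa Hcx Hsx).
  split.
  - pose proof (Psi_critical _ _ _ _ _ (cos2_add_sin2 (T - al)) Hr1) as EP.
    intros E. apply Rmult_integral in E as [E | E]; [rewrite E in Hsg; lra|].
    rewrite E, Rmult_0_l in EP.
    assert (0 < rho T * (sqrt q * sqrt q - 1)) by (apply Rmult_lt_0_compat; nra). lra.
  - pose proof (det_critical _ _ _ _ _ _ _ (cos2_add_sin2 (T - al)) Hr1 (Derive2_ln_rho T)) as ED.
    pose proof (curvature_margin _ _ _ Hsq (COS_bound (T - al)) HD (Hcurv T)).
    intros E. rewrite E, Rmult_0_l in ED.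
    assert (0 < rho T ^ 2) by (apply pow2_gt_0; lra). nra.
Qed.

End Curve.

Definition amplitude (q : R) (rho : R -> R) (a : R) (p : nat * nat) : R :=
  let '(j, l) := p in
  Psi_eta q rho a (thT q rho j l a) (thX q rho j l a)
  / sqrt (Rabs (detD2psi q rho a (thT q rho j l a) (thX q rho j l a))).

Lemma amplitude_neq0 q rho a p :
  1 < q -> (forall t, 0 < rho t) -> (forall t, rho (t + 2 * PI) = rho t) ->
  (forall t, ex_derive rho t) -> (forall t, ex_derive (Derive rho) t) ->
  (forall t, Derive (Derive (fun s => ln (rho s))) t < sqrt q / (1 + sqrt q)) ->
  In p all_idx -> amplitude q rho a p <> 0.
Proof.
  intros Hq Hpos Hper Hd1 Hd2 Hcurv Hp. destruct p as [j l].
  assert (Hl : (l = 1 \/ l = 2)%nat)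
    by (simpl in Hp; destruct Hp as [E|[E|[E|[E|[]]]]]; injection E; lia).
  destruct (Psi_det_neq0 q rho Hq Hpos Hper Hd1 Hd2 j l a Hl Hcurv) as [HP HD].
  unfold amplitude. apply Rmult_integral_contrapositive_currified; [exact HP|].
  apply Rinv_neq_0_compat, Rgt_not_eq, sqrt_lt_R0, Rabs_pos_lt, HD.
Qed.

Lemma term_pow q rho phi k N a p :
  term q rho phi k N a p = (RtoC (f_eta q rho a p ^ N) * term q rho phi k 0 a p)%C.
Proof.
  destruct p as [j l]. unfold term. cbv zeta. unfold Rdiv. rewrite !RtoC_mult. simpl pow. ring.
Qed.

Lemma Cmod_cexpi t : Cmod (cexpi t) = 1.
Proof. unfold Cmod, cexpi. cbn [fst snd]. rewrite cos2_add_sin2. apply sqrt_1. Qed.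

Lemma Cmod_term0 q rho phi k a p :
  Cmod (term q rho phi k 0 a p) = Rabs (amplitude q rho a p) * Cmod (phi_at q rho phi a p).
Proof.
  destruct p as [j l]. unfold term, amplitude. cbv zeta.
  rewrite !Cmod_mult, Cmod_R, Cmod_cexpi, pow_O, Rmult_1_l. ring.
Qed.

Lemma null_seq_terms_const_on q rho phi k a B :
  const_on (f_eta q rho a) B -> null_seq (fun n => sumC B (term q rho phi (k n) 0 a)) ->
  forall N, is_lim_seq (fun n => Cmod (sumC B (term q rho phi (k n) N a))) 0.
Proof.
  intros HB HBz N. eapply null_seq_ext; [|exact (null_seq_const_on _ _ B HB HBz N)].
  intros n. apply sumC_ext. intros p _. symmetry. apply term_pow.
Qed.

Lemma In_Lambda q rho phi a p :
  In p (Lambda q rho phi a) <-> In p all_idx /\ phi_at q rho phi a p <> 0%C.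
Proof.
  unfold Lambda, in_Lambda. rewrite filter_In.
  destruct (excluded_middle_informative (phi_at q rho phi a p = 0%C)); intuition discriminate.
Qed.

Lemma NoDup_Lambda q rho phi a : NoDup (Lambda q rho phi a).
Proof. apply NoDup_filter. repeat constructor; simpl; intuition discriminate. Qed.

Lemma Lambda_length_le4 q rho phi a : (length (Lambda q rho phi a) <= 4)%nat.
Proof. apply filter_length_le. Qed.

Lemma Cmod_term0_Lambda q rho phi a p :
  1 < q -> (forall t, 0 < rho t) -> (forall t, rho (t + 2 * PI) = rho t) ->
  (forall t, ex_derive rho t) -> (forall t, ex_derive (Derive rho) t) ->
  (forall t, Derive (Derive (fun s => ln (rho s))) t < sqrt q / (1 + sqrt q)) ->
  In p (Lambda q rho phi a) ->
  exists c, 0 < c /\ forall k, Cmod (term q rho phi k 0 a p) = c.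
Proof.
  intros Hq Hpos Hper Hd1 Hd2 Hcurv Hp. apply In_Lambda in Hp as [Hp Hphi].
  exists (Rabs (amplitude q rho a p) * Cmod (phi_at q rho phi a p)).
  split; [|intros k; apply Cmod_term0].
  apply Rmult_lt_0_compat; [apply Rabs_pos_lt, amplitude_neq0; assumption|].
  destruct (Cmod_ge_0 (phi_at q rho phi a p)) as [Hgt | E]; [exact Hgt|].
  symmetry in E. now apply Cmod_eq_0 in E.
Qed.

Lemma sumC_Lambda q rho phi k N a :
  sumC all_idx (term q rho phi k N a) = sumC (Lambda q rho phi a) (term q rho phi k N a).
Proof.
  unfold Lambda. rewrite sumC_filter. apply sumC_ext. intros [j l] _. unfold in_Lambda.
  destruct (excluded_middle_informative (phi_at q rho phi a (j, l) = 0%C)) as [E|E]; [|reflexivity].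
  unfold term. cbv zeta. rewrite E. ring.
Qed.

Theorem lemma7 (q : R) (rho : R -> R) (phi : R -> C) (k : nat -> R) :
  1 < q ->
  (forall t, 0 < rho t) ->
  (forall t, rho (t + 2 * PI) = rho t) ->
  (forall t, ex_derive rho t) ->
  (forall t, ex_derive (Derive rho) t) ->
  (forall t, continuous (Derive (Derive rho)) t) ->
  (forall t, Derive (Derive (fun s => ln (rho s))) t < sqrt q / (1 + sqrt q)) ->
  (forall t, phi (t + 2 * PI) = phi t) ->
  (forall t, continuous phi t) ->
  (forall n, 0 < k n) ->
  is_lim_seq k p_infty ->
  (forall (a : R) (N : nat),
     is_lim_seq (fun n => Cmod (sumC all_idx (term q rho phi (k n) N a))) 0) ->
  forall a : R,
    let L := Lambda q rho phi a in
    (length L = 0 \/ length L = 2 \/ length L = 3 \/ length L = 4)%nat /\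
    ((length L = 2 \/ length L = 3)%nat -> f_const_on q rho a L) /\
    (length L = 4%nat ->
       f_const_on q rho a L \/
       exists L1 L2 : list (nat * nat),
         Permutation (L1 ++ L2) L /\
         length L1 = 2%nat /\ length L2 = 2%nat /\
         f_const_on q rho a L1 /\ f_const_on q rho a L2 /\
         forall N : nat,
           is_lim_seq (fun n => Cmod (sumC L1 (term q rho phi (k n) N a))) 0 /\
           is_lim_seq (fun n => Cmod (sumC L2 (term q rho phi (k n) N a))) 0).
Proof.
  intros Hq Hpos Hper Hd1 Hd2 _ Hcurv _ _ _ _ Hlim a L.
  set (f := f_eta q rho a).
  set (X := fun n p => term q rho phi (k n) 0 a p).
  assert (Hmom : forall N, null_seq (fun n => sumC L (fun p => RtoC (f p ^ N) * X n p)%C)).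
  { intros N. eapply null_seq_ext; [|exact (Hlim a N)]. intros n. cbv beta.
    rewrite sumC_Lambda. apply sumC_ext. intros p _. apply term_pow. }
  assert (Hpaired : paired f L).
  { apply (paired_of_moments L f X Hmom (NoDup_Lambda q rho phi a)).
    intros p Hp. destruct (Cmod_term0_Lambda q rho phi a p Hq Hpos Hper Hd1 Hd2 Hcurv Hp)
      as (c & Hc & Hmod).
    exists c. split; [exact Hc | intros n; apply Hmod]. }
  destruct (paired_classification f L Hpaired (Lambda_length_le4 q rho phi a))
    as (Hlen & H23 & H4).
  split; [exact Hlen | split; [exact H23 |]].
  intros Hlen4. destruct (H4 Hlen4) as [Hc | (v & H1 & H2 & Hc2)]; [now left | right].
  exists (fiber f v L), (fiber_compl f v L).
  split; [apply Permutation_filter_split|].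
  do 2 (split; [assumption|]). split; [apply const_on_fiber | split; [exact Hc2|]].
  intros N. split; apply null_seq_terms_const_on.
  - apply const_on_fiber.
  - exact (null_seq_fiber L f X Hmom v).
  - exact Hc2.
  - exact (null_seq_fiber_compl L f X Hmom v).
Qed.
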